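(* For every even $n\ge0$ and every graph $G$ of order $n$, the number of faces satisfies $F(G)\le \frac{3n}{2}+1$.
   Context: Trees. A 2-rooted ternary tree of order $n$ is a finite plane tree $U$ with a root vertex of degree 2 and $n$ true vertices of degree 4; each edge is internal or a leaf (half-edge). Each true vertex $v$ has parent edge $e_1(v)$ (towards the root) and ordered children edges $e_2(v),e_3(v),e_4(v)$. One root edge has type $\alpha$, the other $\bar\alpha$; if $e_1(v)$ has type $\tau$ then $e_2(v)$ has the other type and $e_3(v),e_4(v)$ have type $\tau$. Leaves of type $\alpha$ are leaves, of type $\bar\alpha$ anti-leaves ($n+1$ each). A heap-ordering labels true vertices bijectively by $\{1,\dots,n\}$, increasing from parent to child. Graphs. For even $n$, a graph of order $n$ is $G=(U,w,w')$: $U$ heap-ordered; $w$ a bijection leaves $\to$ anti-leaves (dashed edges; internal edges are solid); $w'$ a partition of true vertices into $n/2$ pairs (wavy edges) with, for each pair $\{v,v'\}$ ($v$ of smaller label), one of eight propagators in $(S,j,k)=(S_v,j_v,k_v)$, $(S',j',k')=(S_{v'},j_{v'},k_{v'})$: $\delta_{jj'}\delta_{kk'}$, $\delta_{j,S-j'}\delta_{kk'}$, $\delta_{jj'}\delta_{k,S-k'}$, $\delta_{j,S-j'}\delta_{k,S-k'}$, $\delta_{jk'}\delta_{kj'}$, $\delta_{j,S-k'}\delta_{kj'}$, $\delta_{jk'}\delta_{k,S-j'}$, $\delta_{j,S-k'}\delta_{k,S-j'}$, together with $S=S'$. Momenta $j_v,S_v-j_v,k_v,S_v-k_v$ are attached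 to the ends at $v$ of $e_1(v),\dots,e_4(v)$. Faces. Call the edge-ends at true vertices and at the root slots. Each propagator of a wavy edge $\{v,v'\}$, with $S=S'$, identifies each of $j,S-j,k,S-k$ of $v$ with one momentum of $v'$, hence pairs each slot of $v$ with a slot of $v'$; these four pairs are the corners of that wavy edge ($2n$ corners). Let $\Gamma$ be the graph on the slots whose edges are the solid and dashed edges of $G$, the corners, and one extra edge joining the two root slots; every slot has degree 2 and the connected components (cycles) of $\Gamma$ are the faces; $F(G)$ is their number. *)

From mathcomp Require Import all_boot.
Set Implicit Arguments. Unset Strict Implicit. Unset Printing Implicit Defensive.

(* Heap-ordered 2-rooted ternary trees of order n.                           *)
(* True vertices are labelled by their heap label, i.e. by 'I_n (label v+1  *)
(* in the paper is v : 'I_n here).                                           *)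
(* A "position" is a place where an edge can hang below its upper end:       *)
(*   inl i       : the i-th root edge (i = 0, 1), at the root;               *)
(*   inr (u, k)  : the child edge e_{k+2}(u) of the true vertex u (k < 3).   *)
(* The tree is given by the map par : 'I_n -> Pos n sending each true vertex *)
(* v to the position of its parent edge e_1(v).  Unoccupied positions are    *)
(* leaves / anti-leaves (half-edges).                                        *)

Definition Pos (n : nat) := ('I_2 + ('I_n * 'I_3))%type.

(* Slots: edge-ends at the root (inl i) and at true vertices (inr (v, i)),   *)
(* where slot inr (v, i) is the end at v of e_{i+1}(v).                      *)
Definition Slot (n : nat) := ('I_2 + ('I_n * 'I_4))%type.

Definition is_heap_tree (n : nat) (par : 'I_n -> Pos n) : Prop :=
  injective par /\
  (forall (v u : 'I_n) (k : 'I_3), par v = inr (u, k) -> (u < v)%N).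

(* Types: true = alpha, false = alpha-bar.  Root edge 0 has type alpha, root *)
(* edge 1 has type alpha-bar.  If e_1(u) has type t then e_2(u) has type     *)
(* ~~ t and e_3(u), e_4(u) have type t.  vtype_f computes the type of e_1(v) *)
(* by walking up the tree (fuel n suffices: labels strictly decrease).       *)
Fixpoint vtype_f (n : nat) (par : 'I_n -> Pos n) (f : nat) (v : 'I_n)
  {struct f} : bool :=
  match f with
  | 0 => true
  | f'.+1 =>
      match par v with
      | inl i => i == ord0
      | inr (u, k) => if k == ord0 then ~~ vtype_f par f' u
                      else vtype_f par f' u
      end
  end.

Definition vtype (n : nat) (par : 'I_n -> Pos n) (v : 'I_n) : bool :=
  vtype_f par n v.

Definition postype (n : nat) (par : 'I_n -> Pos n) (p : Pos n) : bool :=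
  match p with
  | inl i => i == ord0
  | inr (u, k) => if k == ord0 then ~~ vtype par u else vtype par u
  end.

Definition occupied (n : nat) (par : 'I_n -> Pos n) (p : Pos n) : bool :=
  [exists v, par v == p].

Definition is_leaf (n : nat) (par : 'I_n -> Pos n) (p : Pos n) : bool :=
  ~~ occupied par p && postype par p.

Definition is_antileaf (n : nat) (par : 'I_n -> Pos n) (p : Pos n) : bool :=
  ~~ occupied par p && ~~ postype par p.

(* The eight propagators of a wavy edge {v, v'} (v of smaller label), with   *)
(* (S,j,k) at v and (S',j',k') at v', always together with S = S'.           *)
Inductive propagator :=
| P_jj_kk     (* delta_{j j'}   delta_{k k'}   *)
| P_jSj_kk    (* delta_{j,S-j'} delta_{k k'}   *)
| P_jj_kSk    (* delta_{j j'}   delta_{k,S-k'} *)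
| P_jSj_kSk   (* delta_{j,S-j'} delta_{k,S-k'} *)
| P_jk_kj     (* delta_{j k'}   delta_{k j'}   *)
| P_jSk_kj    (* delta_{j,S-k'} delta_{k j'}   *)
| P_jk_kSj    (* delta_{j k'}   delta_{k,S-j'} *)
| P_jSk_kSj.  (* delta_{j,S-k'} delta_{k,S-j'} *)

(* Momenta at the slots of a vertex: slot 0 : j, slot 1 : S-j, slot 2 : k,   *)
(* slot 3 : S-k.  corner_map p i = the slot of v' whose momentum is          *)
(* identified (by p, with S = S') with the momentum at slot i of v.          *)
Definition corner_map (p : propagator) (i : 'I_4) : 'I_4 :=
  let t := match p with
    | P_jj_kk   => [:: 0; 1; 2; 3]
    | P_jSj_kk  => [:: 1; 0; 2; 3]
    | P_jj_kSk  => [:: 0; 1; 3; 2]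
    | P_jSj_kSk => [:: 1; 0; 3; 2]
    | P_jk_kj   => [:: 2; 3; 0; 1]
    | P_jSk_kj  => [:: 3; 2; 0; 1]
    | P_jk_kSj  => [:: 2; 3; 1; 0]
    | P_jSk_kSj => [:: 3; 2; 1; 0]
    end%N in
  inord (nth 0%N t i).

(* A graph of order n: the tree (par), the dashed edges w (a bijection from  *)
(* leaves to anti-leaves), and the wavy edges (a fixed-point-free involution *)
(* mate on true vertices, the pair {v, mate v} carrying the propagator      *)
(* prop v, where v is the smaller label of the pair).                        *)
Record graph (n : nat) := Graph {
  par  : 'I_n -> Pos n;
  wmap : Pos n -> Pos n;
  mate : 'I_n -> 'I_n;
  prop : 'I_n -> propagator
}.

Definition is_graph (n : nat) (G : graph n) : Prop :=
  is_heap_tree (par G) /\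
  (forall p, is_leaf (par G) p -> is_antileaf (par G) (wmap G p)) /\
  (forall p q, is_leaf (par G) p -> is_leaf (par G) q ->
     wmap G p = wmap G q -> p = q) /\
  (forall q, is_antileaf (par G) q ->
     exists2 p, is_leaf (par G) p & wmap G p = q) /\
  (forall v, mate G (mate G v) = v /\ mate G v != v).

Definition pslot (n : nat) (p : Pos n) : Slot n :=
  match p with
  | inl i => inl i
  | inr (u, k) => inr (u, lift ord0 k)
  end.

Definition link (T : eqType) (a b s t : T) : bool :=
  ((s == a) && (t == b)) || ((s == b) && (t == a)).

(* The graph Gamma on slots: solid edges, dashed edges, corners, and the    *)
(* extra edge joining the two root slots.                                    *)
Definition gamma (n : nat) (G : graph n) : rel (Slot n) :=
  fun s t =>
  [|| [exists v : 'I_n, link (pslot (par G v)) (inr (v, ord0)) s t],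
      [exists p : Pos n, is_leaf (par G) p &&
                          link (pslot p) (pslot (wmap G p)) s t],
      [exists v : 'I_n, (v < mate G v)%N &&
         [exists i : 'I_4,
            link (inr (v, i)) (inr (mate G v, corner_map (prop G v) i)) s t]]
    | link (inl ord0 : Slot n) (inl ord_max) s t].

Definition faces (n : nat) (G : graph n) : nat :=
  #|[set [set t | connect (gamma G) s t] | s : Slot n]|.

From mathcomp Require Import all_boot zify.

Set Implicit Arguments.
Unset Strict Implicit.
Unset Printing Implicit Defensive.

(* Every face contains a slot of R, where R consists of the root slot of type
   alpha and the three child slots of each vertex that is the smaller end of its
   wavy edge.  Starting from any slot, a corner moves from the larger end of a
   wavy edge to the smaller one, and the parent slot of a vertex is joined by
   its solid edge to a slot of its parent, which has a smaller label, or to a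
   root slot; so induction on labels reaches R.  Hence F(G) <= #|R| = 1 + 3n/2. *)

Lemma card_connect_classes_le (T : finType) (e : rel T) (R : {set T}) :
  connect_sym e -> (forall s, exists2 r, r \in R & connect e s r) ->
  #|[set [set t | connect e s t] | s : T]| <= #|R|.
Proof.
move=> sym_e reach_R.
apply: leq_trans (leq_imset_card (fun s => [set t | connect e s t]) R).
apply/subset_leq_card/subsetP => _ /imsetP[s _ ->].
have [r Rr sr] := reach_R s; apply/imsetP; exists r => //.
by apply/setP => t; rewrite !inE (same_connect sym_e sr).
Qed.

Lemma card_ltf_involutive n (f : 'I_n -> 'I_n) :
  involutive f -> 2 * #|[set v : 'I_n | v < f v]| <= n.
Proof.
move=> fK; set A := [set v : 'I_n | v < f v].
have fA_compl : f @: A \subset ~: A.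
  apply/subsetP => x /imsetP[v]; rewrite inE => lt_vf ->.
  by rewrite !inE fK -leqNgt ltnW.
have := subset_leq_card fA_compl; rewrite card_imset; last exact: inv_inj.
move=> le_A_compl; rewrite mul2n -addnn.
by apply: leq_trans (_ : #|A| + #|~: A| <= n); rewrite ?leq_add2l // cardsC card_ord.
Qed.

Lemma corner_map_surj p (i : 'I_4) : exists j, corner_map p j = i.
Proof.
rewrite -(inord_val i); case: (val i) (ltn_ord i) => [|[|[|[|//]]]] _; case: p;
  by [exists ord0 | exists (@Ordinal 4 1 isT) | exists (@Ordinal 4 2 isT)
     | exists ord_max].
Qed.

Lemma link_sym (T : eqType) (a b : T) : symmetric (link a b).
Proof. by move=> s t; rewrite /link orbC andbC [(t == b) && _]andbC. Qed.

Section FaceRepresentatives.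

Variables (n : nat) (G : graph n).

Lemma gamma_sym : symmetric (gamma G).
Proof.
move=> s t; rewrite /gamma link_sym; congr [|| _, _, _ | _].
- by apply: eq_existsb => v; rewrite link_sym.
- by apply: eq_existsb => p; rewrite link_sym.
- by apply: eq_existsb => v; congr (_ && _); apply: eq_existsb => i; rewrite link_sym.
Qed.

Lemma gamma_parent (v : 'I_n) : gamma G (inr (v, ord0)) (pslot (par G v)).
Proof. by apply/or4P/Or41/existsP; exists v; rewrite /link !eqxx orbT. Qed.

Lemma gamma_corner (v : 'I_n) (i : 'I_4) : v < mate G v ->
  gamma G (inr (v, i)) (inr (mate G v, corner_map (prop G v) i)).
Proof.
move=> lt_v_mate; apply/or4P/Or43/existsP; exists v.
by rewrite lt_v_mate; apply/existsP; exists i; rewrite /link !eqxx.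
Qed.

Lemma connect_root (i : 'I_2) : connect (gamma G) (inl i) (inl ord0).
Proof.
case: i => -[|[|//]] lt_i2; first by rewrite (_ : Ordinal _ = ord0) //; exact: val_inj.
apply: connect1; rewrite gamma_sym; apply/or4P/Or44.
by rewrite /link (_ : Ordinal _ = ord_max) ?eqxx //; exact: val_inj.
Qed.

Definition lower_mates : {set 'I_n} := [set v : 'I_n | v < mate G v].

Definition face_reps : {set Slot n} :=
  inl ord0 |: [set inr vi | vi in setX lower_mates [set~ ord0]].

Lemma card_face_reps : #|face_reps| <= 1 + 3 * #|lower_mates|.
Proof.
rewrite cardsU1 leq_add ?leq_b1 //; apply: leq_trans (leq_imset_card _ _) _.
by rewrite cardsX cardsC1 card_ord mulnC.
Qed.

Hypothesis mateK : involutive (mate G).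
Hypothesis mate_neq : forall v, mate G v != v.
Hypothesis par_lt : forall (v u : 'I_n) (k : 'I_3), par G v = inr (u, k) -> u < v.

Lemma connect_lower_mate (w : 'I_n) (i : 'I_4) : exists (v : 'I_n) (j : 'I_4),
  [/\ v < mate G v, v <= w & connect (gamma G) (inr (w, i)) (inr (v, j))].
Proof.
have [lt_w_mate | le_mate_w] := ltnP w (mate G w); first by exists w, i.
have lt_mate_w : mate G w < w.
  by rewrite ltn_neqAle le_mate_w andbT; exact: mate_neq w.
have [j <-] := corner_map_surj (prop G (mate G w)) i.
exists (mate G w), j; split; [by rewrite mateK | exact: ltnW |].
by apply: connect1; rewrite gamma_sym -{2}(mateK w) gamma_corner ?mateK.
Qed.

Lemma connect_face_reps s : exists2 r, r \in face_reps & connect (gamma G) s r.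
Proof.
case: s => [i | [w i]].
  by exists (inl ord0); [exact: setU11 | exact: connect_root].
have [m] := ubnP w; elim: m w i => // m IHm w i lt_w_m.
have [v [j [lt_v_mate le_vw wi_vj]]] := connect_lower_mate w i.
have [j0 | nz_j] := eqVneq j ord0; last first.
  exists (inr (v, j)); last exact: wi_vj.
  apply/setU1P; right; apply/imsetP; exists (v, j) => //.
  by rewrite in_setX !inE lt_v_mate nz_j.
rewrite {}j0 in wi_vj.
have wi_par := connect_trans wi_vj (connect1 (gamma_parent v)).
case par_v: (par G v) wi_par => [i0 | [u k]] wi_par.
  by exists (inl ord0); [exact: setU11 | exact: connect_trans wi_par (connect_root i0)].
have lt_u_m : u < m := leq_trans (par_lt par_v) (leq_trans le_vw lt_w_m).
have [r reps_r ur] := IHm u (lift ord0 k) lt_u_m.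
by exists r; last exact: connect_trans wi_par ur.
Qed.

End FaceRepresentatives.

Theorem lemma2 (n : nat) (G : graph n) :
  ~~ odd n -> is_graph G -> faces G <= (3 * n) %/ 2 + 1.
Proof.
move=> /negbTE even_n [[_ par_lt] [_ [_ [_ mate_inv]]]].
have mateK : involutive (mate G) by move=> v; case: (mate_inv v).
have mate_neq v : mate G v != v by case: (mate_inv v).
have faces_le : faces G <= #|face_reps G| :=
  card_connect_classes_le (sym_connect_sym (@gamma_sym n G))
    (connect_face_reps mateK mate_neq par_lt).
have reps_le : #|face_reps G| <= 1 + 3 * #|lower_mates G| := card_face_reps G.
have lower_le : 2 * #|lower_mates G| <= n := card_ltf_involutive mateK.
have := odd_double_half n; rewrite even_n; lia.
Qed.
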